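(* Let $S$ be a semigroup which is categorical at zero, $0$-left cancellative, right reductive, has right local units and admits least common multiples. Then the nonzero elements of the inverse hull $\mathcal H(S)$ are precisely the elements $\theta_s\theta_t^{-1}$ with $s,t\in S\setminus\{0\}$ and $s^+=t^+$. Moreover, if $s_1,t_1,s_2,t_2\in S\setminus\{0\}$ with $s_1^+=t_1^+$ and $s_2^+=t_2^+$, then $\theta_{s_1}\theta_{t_1}^{-1}=\theta_{s_2}\theta_{t_2}^{-1}$ if and only if there exist $x,y\in S$ with $xy=s_1^+$, $yx=s_2^+$, $s_1x=s_2$, $t_1x=t_2$, $s_2y=s_1$ and $t_2y=t_1$.
   Context: $S$ has zero $0$, $S'=S\setminus\{0\}$. Categorical at zero: $rs\neq0$ and $st\neq0$ imply $rst\neq0$. $0$-left cancellative: $st=sr\neq0\Rightarrow t=r$. Right reductive: $sx=tx$ for all $x$ implies $s=t$. Right local units: each $s$ has an idempotent $e$ with $se=s$; under these hypotheses each nonzero $s$ has a unique idempotent $s^+$ with $ss^+=s$. Least common multiples: with $\tilde S=S\cup\{1\}$, $s\mid t$ iff $t\in s\tilde S$; $r$ is an lcm of $s,t$ if $sS\cap tS=rS$, $s\mid r$, $t\mid r$; every pair has one. $\theta_s:\{x\in S':sx\neq0\}\to sS\setminus\{0\}$, $x\mapsto sx$; $\mathcal H(S)$ is the inverse semigroup of partial bijections of $S'$ generated by all $\theta_s$ (its zero is the empty map). *)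

From Stdlib Require Import Classical ClassicalEpsilon FunctionalExtensionality PropExtensionality.

Section SG.
Variables (S : Type) (mul : S -> S -> S) (z : S).

Definition semigroup_with_zero : Prop :=
  (forall a b c, mul a (mul b c) = mul (mul a b) c) /\
  (forall a, mul z a = z) /\ (forall a, mul a z = z).

Definition categorical_at_zero : Prop :=
  forall r s t, mul r s <> z -> mul s t <> z -> mul (mul r s) t <> z.

Definition zero_left_cancellative : Prop :=
  forall s t r, mul s t = mul s r -> mul s t <> z -> t = r.

Definition right_reductive : Prop :=
  forall s t, (forall x, mul s x = mul t x) -> s = t.

Definition right_local_units : Prop :=
  forall s, exists e, mul e e = e /\ mul s e = s.

(* s | t in S~ = S ∪ {1}, i.e. t ∈ s S~ *)
Definition sdivides (s t : S) : Prop := t = s \/ exists u, t = mul s u.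

Definition is_lcm (s t r : S) : Prop :=
  (forall w, ((exists a, w = mul s a) /\ (exists b, w = mul t b)) <->
             (exists c, w = mul r c)) /\ sdivides s r /\ sdivides t r.

Definition has_lcms : Prop := forall s t, exists r, is_lcm s t r.

(* s^+ : the (unique, under the standing hypotheses) idempotent e with s e = s *)
Definition splus (s : S) : S :=
  epsilon (inhabits z) (fun e => mul e e = e /\ mul s e = s).

(* Partial bijections of S' represented by their graphs. *)
Definition pmap := S -> S -> Prop.

Definition theta (s : S) : pmap :=
  fun x y => x <> z /\ mul s x <> z /\ y = mul s x.

(* composition f g = "first g, then f" (functions act on the left) *)
Definition pcomp (f g : pmap) : pmap := fun x y => exists w, g x w /\ f w y.
Definition pinv (f : pmap) : pmap := fun x y => f y x.
Definition pempty : pmap := fun _ _ => False.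

Inductive hull : pmap -> Prop :=
| hull_gen : forall s, hull (theta s)
| hull_comp : forall f g, hull f -> hull g -> hull (pcomp f g)
| hull_inv : forall f, hull f -> hull (pinv f).

End SG.

From Stdlib Require Import Classical ClassicalEpsilon FunctionalExtensionality PropExtensionality.

(* Every generator satisfies θ_s = θ_s θ_{s⁺}^{-1}, inversion swaps the two
   indices, and a product θ_p θ_q^{-1} θ_u θ_v^{-1} collapses to θ_{pa} θ_{vb}
   where qa = ub is a least common multiple of q and u (or to the empty map when
   that lcm is 0).  Hence every element of H(S) is some θ_p θ_q^{-1}; multiplying
   p and q on the right by an lcm of p⁺ and q⁺ does not change the map and makes
   the two idempotents agree.  For the equality criterion, the pair (t_1, s_1)
   lies in the graph of θ_{s_1}θ_{t_1}^{-1}: evaluating the second presentation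
   there gives y, and symmetrically x. *)

Lemma pmap_ext (S : Type) (f g : pmap S) : (forall x y, f x y <-> g x y) -> f = g.
Proof.
  intro H. apply functional_extensionality; intro x.
  apply functional_extensionality; intro y. apply propositional_extensionality, H.
Qed.

Section InverseHull.
Variables (S : Type) (mul : S -> S -> S) (z : S).
Hypothesis Hsg : semigroup_with_zero S mul z.
Hypothesis Hcat : categorical_at_zero S mul z.
Hypothesis Hcanc : zero_left_cancellative S mul z.
Hypothesis Hunits : right_local_units S mul.
Hypothesis Hlcm : has_lcms S mul.

Local Infix "·" := mul (at level 40, left associativity).
Local Notation "s ⁺" := (splus S mul z s) (at level 2, format "s ⁺").
Local Notation θ := (theta S mul z).
Local Notation thq p q := (pcomp S (theta S mul z p) (pinv S (theta S mul z q))).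
Local Notation "∅" := (pempty S).

Lemma mul_assoc a b c : a · (b · c) = a · b · c.
Proof. apply Hsg. Qed.

Lemma mul0s a : z · a = z.
Proof. apply Hsg. Qed.

Lemma muls0 a : a · z = z.
Proof. apply Hsg. Qed.

Lemma mul_neq0_l a b : a · b <> z -> a <> z.
Proof. intros H ->. apply H, mul0s. Qed.

Lemma mul_neq0_r a b : a · b <> z -> b <> z.
Proof. intros H ->. apply H, muls0. Qed.

Lemma mul_splus s : s · s⁺ = s.
Proof. exact (proj2 (epsilon_spec _ _ (Hunits s))). Qed.

Lemma splus_neq0 s : s <> z -> s⁺ <> z.
Proof. intros Hs H. apply Hs. rewrite <- (mul_splus s), H. apply muls0. Qed.

Lemma splus_unique s e : s <> z -> s · e = s -> s⁺ = e.
Proof.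
  intros Hs Hse. apply (Hcanc s); rewrite mul_splus; [now rewrite Hse | exact Hs].
Qed.

Lemma splus_mul_l s y : s · y <> z -> s⁺ · y = y.
Proof. intro H. apply (Hcanc s); rewrite mul_assoc, mul_splus; auto. Qed.

Lemma splus_mul p r : p · r <> z -> (p · r)⁺ = r⁺.
Proof.
  intro H. apply splus_unique; [exact H|]. now rewrite <- mul_assoc, mul_splus.
Qed.

Lemma sdivides_mul s t : sdivides S mul s t -> exists u, t = s · u.
Proof.
  intros [-> | Hu]; [|exact Hu]. exists s⁺. now rewrite mul_splus.
Qed.

Lemma theta_splus s : θ s = thq s s⁺.
Proof.
  apply pmap_ext. intros x y. unfold pcomp, pinv, theta. split.
  - intros [Hx [Hsx ->]]. exists x. rewrite (splus_mul_l s x Hsx). repeat split; auto.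
  - intros [w [[Hw [Hew ->]] [_ [Hsw ->]]]]. rewrite mul_assoc, mul_splus. auto.
Qed.

Lemma pinv_thq p q : pinv S (thq p q) = thq q p.
Proof.
  apply pmap_ext. intros x y. unfold pcomp, pinv. split; intros [w [H1 H2]]; eauto.
Qed.

Lemma thq_zero_r p : thq p z = ∅.
Proof.
  apply pmap_ext. intros x y. split; [|intros []].
  intros [w [[_ [H _]] _]]. apply H, mul0s.
Qed.

Lemma pcomp_thq_disjoint p q u v :
  is_lcm S mul q u z -> pcomp S (thq p q) (thq u v) = ∅.
Proof.
  intros [Hr _]. apply pmap_ext. intros X Y. split; [|intros []].
  intros [w [[x [_ [_ [Hux Hw]]]] [y [[_ [_ Hw']] _]]]].
  destruct (proj1 (Hr w)) as [c Hc]; [split; eauto|].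
  apply Hux. rewrite <- Hw, Hc. apply mul0s.
Qed.

(* [w] lies in [uS ∩ qS = rS], and cancelling [u], [q] in [w = rc] recovers
   the two intermediate points as [bc] and [ac]. *)
Lemma pcomp_thq p q u v r a b :
  is_lcm S mul q u r -> r = q · a -> r = u · b -> r <> z ->
  pcomp S (thq p q) (thq u v) = thq (p · a) (v · b).
Proof.
  intros [Hr _] Ha Hb Hr0. apply pmap_ext. intros X Y. unfold pcomp, pinv, theta. split.
  - intros [w [[x [[Hx [Hvx HX]] [_ [Hux Hw]]]] [y [[Hy [Hqy Hw']] [_ [Hpy HY]]]]]].
    destruct (proj1 (Hr w)) as [c Hc]; [split; eauto|].
    assert (Hxb : x = b · c).
    { apply (Hcanc u); [|exact Hux]. now rewrite mul_assoc, <- Hb, <- Hc. }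
    assert (Hya : y = a · c).
    { apply (Hcanc q); [|exact Hqy]. now rewrite mul_assoc, <- Ha, <- Hc. }
    subst x y. exists c. rewrite <- !mul_assoc.
    repeat split; auto; apply (mul_neq0_r b c); assumption.
  - intros [c [[Hc [Hvbc HX]] [_ [Hpac HY]]]]. rewrite <- mul_assoc in Hvbc, Hpac.
    assert (Hbc : b · c <> z) by exact (mul_neq0_r _ _ Hvbc).
    assert (Hac : a · c <> z) by exact (mul_neq0_r _ _ Hpac).
    assert (Hubc : u · (b · c) = r · c) by now rewrite mul_assoc, <- Hb.
    assert (Hqac : q · (a · c) = r · c) by now rewrite mul_assoc, <- Ha.
    assert (Hrc : r · c <> z).
    { rewrite <- Hubc, mul_assoc. apply Hcat; [now rewrite <- Hb | exact Hbc]. }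
    exists (r · c). split.
    + exists (b · c). rewrite Hubc, HX, <- mul_assoc. repeat split; auto.
    + exists (a · c). rewrite Hqac, HY, <- mul_assoc. repeat split; auto.
Qed.

Lemma hull_thq f : hull S mul z f -> exists p q, f = thq p q.
Proof.
  induction 1 as [s | f g _ [p [q ->]] _ [u [v ->]] | f _ [p [q ->]]].
  - exists s, s⁺. apply theta_splus.
  - destruct (Hlcm q u) as [r Hr].
    destruct (classic (r = z)) as [-> | Hr0].
    + exists z, z. rewrite thq_zero_r. now apply pcomp_thq_disjoint.
    + destruct (sdivides_mul _ _ (proj1 (proj2 Hr))) as [a Ha].
      destruct (sdivides_mul _ _ (proj2 (proj2 Hr))) as [b Hb].
      exists (p · a), (v · b). now apply pcomp_thq with r.
  - exists q, p. apply pinv_thq.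
Qed.

Lemma thq_mul_r p q r :
  (forall x, p · x <> z -> q · x <> z -> exists c, x = r · c) ->
  thq p q = thq (p · r) (q · r).
Proof.
  intro Hdom. apply pmap_ext. intros X Y. unfold pcomp, pinv, theta. split.
  - intros [w [[Hw [Hqw ->]] [_ [Hpw ->]]]].
    destruct (Hdom w Hpw Hqw) as [c ->].
    exists c. rewrite <- !mul_assoc. repeat split; auto; exact (mul_neq0_r _ _ Hw).
  - intros [c [[Hc [Hqrc ->]] [_ [Hprc ->]]]]. rewrite <- mul_assoc in Hqrc, Hprc.
    exists (r · c). rewrite <- !mul_assoc. repeat split; auto; exact (mul_neq0_r _ _ Hqrc).
Qed.

Lemma thq_normalize p q :
  thq p q <> ∅ -> exists s t, s <> z /\ t <> z /\ s⁺ = t⁺ /\ thq p q = thq s t.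
Proof.
  intro Hne.
  destruct (classic (exists X Y, thq p q X Y)) as [[X [Y [x [[_ [Hqx _]] [_ [Hpx _]]]]]] | Hno].
  2:{ exfalso. apply Hne, pmap_ext. intros X Y. split; [|intros []].
      intro H. apply Hno. eauto. }
  destruct (Hlcm p⁺ q⁺) as [r [Hr _]].
  assert (Hdom : forall x, p · x <> z -> q · x <> z -> exists c, x = r · c).
  { intros y Hpy Hqy. apply Hr.
    split; exists y; symmetry; apply splus_mul_l; assumption. }
  destruct (Hdom x Hpx Hqx) as [c ->].
  rewrite mul_assoc in Hpx, Hqx.
  pose proof (mul_neq0_l _ _ Hpx) as Hpr. pose proof (mul_neq0_l _ _ Hqx) as Hqr.
  exists (p · r), (q · r).
  repeat split; [exact Hpr | exact Hqr | |].
  - now rewrite !splus_mul.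
  - now apply thq_mul_r.
Qed.

Lemma thq_self s t : s <> z -> t <> z -> s⁺ = t⁺ -> thq s t t s.
Proof.
  intros Hs Ht Hst. exists s⁺. unfold pinv, theta.
  rewrite Hst, mul_splus, <- Hst, mul_splus.
  repeat split; auto using splus_neq0.
Qed.

Lemma thq_nonempty s t : s <> z -> t <> z -> s⁺ = t⁺ -> thq s t <> ∅.
Proof. intros Hs Ht Hst H. pose proof (thq_self s t Hs Ht Hst) as Hin. now rewrite H in Hin. Qed.

Lemma thq_eq_of_transition s1 t1 s2 t2 x y :
  s1 · x = s2 -> t1 · x = t2 -> s2 · y = s1 -> t2 · y = t1 -> thq s1 t1 = thq s2 t2.
Proof.
  intros Hs1x Ht1x Hs2y Ht2y. apply pmap_ext. intros X Y. unfold pcomp, pinv, theta. split.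
  - intros [w [[Hw [Ht1w HX]] [_ [Hs1w HY]]]].
    exists (y · w). rewrite !mul_assoc, Hs2y, Ht2y.
    repeat split; auto; apply (mul_neq0_r t2); now rewrite mul_assoc, Ht2y.
  - intros [w [[Hw [Ht2w HX]] [_ [Hs2w HY]]]].
    exists (x · w). rewrite !mul_assoc, Hs1x, Ht1x.
    repeat split; auto; apply (mul_neq0_r t1); now rewrite mul_assoc, Ht1x.
Qed.

Lemma transition_of_thq_eq s1 t1 s2 t2 :
  s1 <> z -> t1 <> z -> s2 <> z -> t2 <> z ->
  s1⁺ = t1⁺ -> s2⁺ = t2⁺ -> thq s1 t1 = thq s2 t2 ->
  exists x y, x · y = s1⁺ /\ y · x = s2⁺ /\
    s1 · x = s2 /\ t1 · x = t2 /\ s2 · y = s1 /\ t2 · y = t1.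
Proof.
  intros Hs1 Ht1 Hs2 Ht2 H1 H2 Heq.
  pose proof (thq_self s1 t1 Hs1 Ht1 H1) as A1.
  pose proof (thq_self s2 t2 Hs2 Ht2 H2) as A2.
  rewrite Heq in A1. rewrite <- Heq in A2.
  destruct A1 as [y [[_ [_ Et1]] [_ [Hs2y Es1]]]].
  destruct A2 as [x [[_ [_ Et2]] [_ [Hs1x Es2]]]].
  exists x, y. repeat split; auto.
  - apply (Hcanc s1); [|now rewrite mul_assoc, <- Es2, <- Es1].
    now rewrite mul_assoc, <- Es2, <- Es1, mul_splus.
  - apply (Hcanc s2); [|now rewrite mul_assoc, <- Es1, <- Es2].
    now rewrite mul_assoc, <- Es1, <- Es2, mul_splus.
Qed.

End InverseHull.

Theorem theorem7p22 (S : Type) (mul : S -> S -> S) (z : S)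
  (Hsg : semigroup_with_zero S mul z)
  (Hcat : categorical_at_zero S mul z)
  (Hcanc : zero_left_cancellative S mul z)
  (Hred : right_reductive S mul)
  (Hunits : right_local_units S mul)
  (Hlcm : has_lcms S mul) :
  (forall f, hull S mul z f -> f <> pempty S ->
     exists s t, s <> z /\ t <> z /\ splus S mul z s = splus S mul z t /\
       f = pcomp S (theta S mul z s) (pinv S (theta S mul z t))) /\
  (forall s t, s <> z -> t <> z -> splus S mul z s = splus S mul z t ->
     hull S mul z (pcomp S (theta S mul z s) (pinv S (theta S mul z t))) /\
     pcomp S (theta S mul z s) (pinv S (theta S mul z t)) <> pempty S) /\
  (forall s1 t1 s2 t2, s1 <> z -> t1 <> z -> s2 <> z -> t2 <> z ->
     splus S mul z s1 = splus S mul z t1 -> splus S mul z s2 = splus S mul z t2 ->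
     (pcomp S (theta S mul z s1) (pinv S (theta S mul z t1)) =
      pcomp S (theta S mul z s2) (pinv S (theta S mul z t2)) <->
      exists x y, mul x y = splus S mul z s1 /\ mul y x = splus S mul z s2 /\
        mul s1 x = s2 /\ mul t1 x = t2 /\ mul s2 y = s1 /\ mul t2 y = t1)).
Proof.
  split; [|split].
  - intros f Hf Hne.
    destruct (hull_thq S mul z Hsg Hcat Hcanc Hunits Hlcm f Hf) as [p [q ->]].
    exact (thq_normalize S mul z Hsg Hcanc Hunits Hlcm p q Hne).
  - intros s t Hs Ht Hst. split.
    + apply hull_comp; [apply hull_gen | apply hull_inv, hull_gen].
    + exact (thq_nonempty S mul z Hsg Hunits s t Hs Ht Hst).
  - intros s1 t1 s2 t2 Hs1 Ht1 Hs2 Ht2 H1 H2. split.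
    + exact (transition_of_thq_eq S mul z Hsg Hcanc Hunits
               s1 t1 s2 t2 Hs1 Ht1 Hs2 Ht2 H1 H2).
    + intros [x [y [_ [_ [Hs1x [Ht1x [Hs2y Ht2y]]]]]]].
      exact (thq_eq_of_transition S mul z Hsg s1 t1 s2 t2 x y Hs1x Ht1x Hs2y Ht2y).
Qed.
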